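(* Let $\mathcal{M}=(E,\rho)$ be a $q$-matroid, $E_1=\mathrm{cl}(0)$, and $E_2\le E$ with $E=E_1\oplus E_2$. Let $\mathcal{M}_i=\mathcal{M}|_{E_i}=(E_i,\rho_i)$ and $\pi_i:E\to E_i$ the projections. Then (a) $\mathcal{M}_1$ is the trivial $q$-matroid on $E_1$; (b) $\rho(V)=\rho_2(\pi_2(V))$ for all $V\le E$; (c) $\mathcal{M}=\mathcal{M}_1\oplus\mathcal{M}_2$. Moreover, $\mathrm{cl}(0)$ consists of all vectors $x\in E$ with $\rho(\langle x\rangle)=0$.
   Context: Let $\mathbb{F}=\mathbb{F}_q$. A $q$-matroid is $\mathcal{M}=(E,\rho)$, $E$ a finite-dimensional $\mathbb{F}$-vector space, $\rho$ from subspaces to $\mathbb{Z}_{\ge0}$ with $0\le\rho(V)\le\dim V$, monotone and submodular. Closure: $\mathrm{cl}(V)=\sum\{\langle x\rangle:\rho(V+\langle x\rangle)=\rho(V)\}$. Restriction $\mathcal{M}|_X=(X,\rho|_{\mathcal{L}(X)})$. Trivial $q$-matroid: rank identically $0$. $\mathcal{M}=\mathcal{M}_1\oplus\mathcal{M}_2$ means $E=E_1\oplus E_2$ and $\rho(V)=\dim V+\min_{X\le V}(\rho_1(\pi_1(X))+\rho_2(\pi_2(X))-\dim X)$ for all $V$. *)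

From HB Require Import structures.
From mathcomp Require Import all_boot all_order all_algebra all_field.
Set Implicit Arguments. Unset Strict Implicit. Unset Printing Implicit Defensive.
Import GRing.Theory.
Local Open Scope ring_scope.

(* Ambient space: 'rV[F]_n with F a finite field (F = F_q, q = #|F|).
   A q-matroid is given by a ground subspace E and a rank function rho on
   subspaces; only its values on subspaces of E matter. *)

Definition qmatroid (F : finFieldType) (n : nat) (E : {vspace 'rV[F]_n})
  (rho : {vspace 'rV[F]_n} -> nat) : Prop :=
  [/\ (forall V, (V <= E)%VS -> (rho V <= \dim V)%N),
      (forall U V, (U <= V)%VS -> (V <= E)%VS -> (rho U <= rho V)%N)
    & (forall U V, (U <= E)%VS -> (V <= E)%VS ->
         (rho (U + V)%VS + rho (U :&: V)%VS <= rho U + rho V)%N)].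

Definition qclosure (F : finFieldType) (n : nat) (E : {vspace 'rV[F]_n})
  (rho : {vspace 'rV[F]_n} -> nat) (V : {vspace 'rV[F]_n}) : {vspace 'rV[F]_n} :=
  (\sum_(x : 'rV[F]_n | (x \in E) && (rho (V + <[x]>)%VS == rho V)) <[x]>)%VS.

(* Restriction M|_X = (X, rho restricted to subspaces of X): represented by
   the pair (X, rho), since all notions only evaluate rho on subspaces of X. *)

Definition qtrivial (F : finFieldType) (n : nat) (E : {vspace 'rV[F]_n})
  (rho : {vspace 'rV[F]_n} -> nat) : Prop :=
  forall V, (V <= E)%VS -> rho V = 0%N.

Definition qdirect_sum (F : finFieldType) (n : nat)
  (E : {vspace 'rV[F]_n}) (rho : {vspace 'rV[F]_n} -> nat)
  (E1 : {vspace 'rV[F]_n}) (rho1 : {vspace 'rV[F]_n} -> nat)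
  (E2 : {vspace 'rV[F]_n}) (rho2 : {vspace 'rV[F]_n} -> nat) : Prop :=
  let pi1 := daddv_pi E1 E2 in
  let pi2 := daddv_pi E2 E1 in
  let val X : int := (rho1 (pi1 @: X)%VS)%:Z + (rho2 (pi2 @: X)%VS)%:Z - (\dim X)%:Z in
  [/\ (E1 :&: E2 = 0)%VS, (E1 + E2)%VS = E &
    forall V, (V <= E)%VS ->
      (forall X, (X <= V)%VS -> (rho V)%:Z <= (\dim V)%:Z + val X) /\
      (exists2 X, (X <= V)%VS & (rho V)%:Z = (\dim V)%:Z + val X)].

From HB Require Import structures.
From mathcomp Require Import all_boot all_order all_algebra all_field.
From mathcomp Require Import zify.
Import GRing.Theory.
Local Open Scope ring_scope.
Set Implicit Arguments. Unset Strict Implicit.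

(* By submodularity, adding a rank-0 subspace never changes the rank, and
   cl(0) is a sum of rank-0 lines, hence has rank 0. Since V + cl(0) =
   pi_2(V) + cl(0), this gives rho(V) = rho(pi_2 V). In the direct-sum formula
   the term rho_1(pi_1 X) vanishes and rho_2(pi_2 X) = rho(X), so it reduces
   to rho(V) - dim V <= rho(X) - dim X for X <= V, which is submodularity
   applied to X and a complement of X in V. *)

Section Projection.
Variables (F : fieldType) (vT : vectType F) (U W : {vspace vT}).
Hypothesis UW0 : (U :&: W = 0)%VS.

Lemma limg_daddv_pi V : (daddv_pi U W @: V <= U)%VS.
Proof. by apply/subvP => _ /memv_imgP [v _ ->]; apply: memv_pi. Qed.

Lemma addv_limg_daddv_pi V :
  (V <= U + W)%VS -> (daddv_pi U W @: V + W = V + W)%VS.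
Proof.
move=> VUW; have pi_split v : v \in V -> daddv_pi U W v = v - daddv_pi W U v.
  move=> Vv; have vUW : v \in (U + W)%VS by apply: subvP Vv.
  by rewrite -{2}(daddv_pi_add UW0 vUW) addrK.
apply/subv_anti/andP; split; rewrite subv_add addvSr andbT.
- apply/subvP => _ /memv_imgP [v Vv ->]; rewrite pi_split //.
  by apply: memv_add => //; rewrite memvN memv_pi.
- apply/subvP => v Vv; rewrite -[v](subrK (daddv_pi W U v)) -pi_split //.
  by apply: memv_add; [apply: memv_img | rewrite memv_pi].
Qed.

End Projection.

Section QMatroidRank.
Variables (F : finFieldType) (n : nat).
Variables (E : {vspace 'rV[F]_n}) (rho : {vspace 'rV[F]_n} -> nat).
Hypothesis rhoM : qmatroid E rho.

Lemma rank_le_dim V : (V <= E)%VS -> (rho V <= \dim V)%N.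
Proof. by case: rhoM => le_dim _ _; apply: le_dim. Qed.

Lemma rankS U V : (U <= V)%VS -> (V <= E)%VS -> (rho U <= rho V)%N.
Proof. by case: rhoM => _ mono _; apply: mono. Qed.

Lemma rank_submod U V : (U <= E)%VS -> (V <= E)%VS ->
  (rho (U + V)%VS + rho (U :&: V)%VS <= rho U + rho V)%N.
Proof. by case: rhoM => _ _ submod; apply: submod. Qed.

Lemma rank0 : rho 0%VS = 0%N.
Proof. by have := rank_le_dim (sub0v E); rewrite dimv0; lia. Qed.

Lemma rank_addv_null A B : (A <= E)%VS -> (B <= E)%VS -> rho B = 0%N ->
  rho (A + B)%VS = rho A.
Proof.
move=> AE BE rhoB0; have ABE : (A + B <= E)%VS by rewrite subv_add AE BE.
have := rank_submod AE BE; have := rankS (addvSl A B) ABE; rewrite rhoB0; lia.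
Qed.

Lemma qtrivial_rank0 B : (B <= E)%VS -> rho B = 0%N -> qtrivial B rho.
Proof. by move=> BE rhoB0 V VB; have := rankS VB BE; rewrite rhoB0; lia. Qed.

Lemma rank_dim_subv X V : (X <= V)%VS -> (V <= E)%VS ->
  (rho V + \dim X <= rho X + \dim V)%N.
Proof.
move=> XV VE; set W := (V :\: X)%VS.
have WXV : (W + X = V)%VS by rewrite /W -{2}(addv_diff_cap V X) (capv_idPr XV).
have WX0 : (W :&: X = 0)%VS by rewrite /W capv_diff.
have WV : (W <= V)%VS by rewrite -WXV addvSl.
have := dimv_sum_cap W X; rewrite WXV WX0 dimv0.
have := rank_submod (subv_trans WV VE) (subv_trans XV VE).
rewrite WXV WX0 rank0.
have := rank_le_dim (subv_trans WV VE); lia.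
Qed.

Lemma qclosure0_subv : (qclosure E rho 0 <= E)%VS.
Proof. by apply/subv_sumP => x /andP [xE _]; rewrite -memvE. Qed.

Lemma rank_qclosure0 : rho (qclosure E rho 0) = 0%N.
Proof.
suff [] : (qclosure E rho 0 <= E)%VS /\ rho (qclosure E rho 0) = 0%N by [].
apply: (big_ind (fun A => (A <= E)%VS /\ rho A = 0%N)).
- by rewrite sub0v rank0.
- by move=> A B [AE rhoA0] [BE rhoB0]; rewrite subv_add AE BE rank_addv_null.
- by move=> x /andP [xE /eqP]; rewrite add0v rank0 -memvE.
Qed.

Lemma mem_qclosure0 x : x \in E -> (x \in qclosure E rho 0) = (rho <[x]> == 0%N).
Proof.
move=> xE; apply/idP/eqP => [x_cl0 | rhox0].
  have := rankS x_cl0 qclosure0_subv.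
  by rewrite rank_qclosure0; lia.
by rewrite memvE; apply: (sumv_sup x) => //; rewrite xE add0v rhox0 rank0 /=.
Qed.

Section NullSummand.
Variables E1 E2 : {vspace 'rV[F]_n}.
Hypotheses (E12_0 : (E1 :&: E2 = 0)%VS) (E12 : (E1 + E2)%VS = E).
Hypothesis rhoE1 : rho E1 = 0%N.

Let E1E : (E1 <= E)%VS. Proof. by rewrite -E12 addvSl. Qed.
Let E2E : (E2 <= E)%VS. Proof. by rewrite -E12 addvSr. Qed.

Lemma rank_daddv_pi V : (V <= E)%VS -> rho V = rho (daddv_pi E2 E1 @: V)%VS.
Proof.
move=> VE; have E21_0 : (E2 :&: E1 = 0)%VS by rewrite capvC.
have piV_E : (daddv_pi E2 E1 @: V <= E)%VS.
  exact: subv_trans (limg_daddv_pi _ _ _) E2E.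
rewrite -(rank_addv_null VE E1E rhoE1) -(rank_addv_null piV_E E1E rhoE1).
by rewrite addv_limg_daddv_pi // addvC E12.
Qed.

Lemma qdirect_sum_rank0_summand : qdirect_sum E rho E1 rho E2 rho.
Proof.
split => // V VE; rewrite -/(daddv_pi E1 E2).
have rank_pi1 X : rho (daddv_pi E1 E2 @: X)%VS = 0%N.
  by apply: (qtrivial_rank0 E1E rhoE1); apply: limg_daddv_pi.
have rank_pi2 X : (X <= V)%VS -> rho (daddv_pi E2 E1 @: X)%VS = rho X.
  by move=> XV; rewrite -rank_daddv_pi // (subv_trans XV VE).
split=> [X XV | ]; last by exists V => //; rewrite rank_pi1 rank_pi2 //; lia.
rewrite rank_pi1 rank_pi2 //.
by have := rank_dim_subv XV VE; have := dimvS XV; lia.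
Qed.

End NullSummand.

End QMatroidRank.

Theorem proposition7p6 (F : finFieldType) (n : nat)
  (rho : {vspace 'rV[F]_n} -> nat) (E2 : {vspace 'rV[F]_n}) :
  qmatroid fullv rho ->
  let E1 := qclosure fullv rho 0%VS in
  (E1 :&: E2 = 0)%VS -> (E1 + E2)%VS = fullv ->
  [/\ qtrivial E1 rho,
      (forall V : {vspace 'rV[F]_n}, rho V = rho (daddv_pi E2 E1 @: V)%VS),
      qdirect_sum fullv rho E1 rho E2 rho
    & (forall x : 'rV[F]_n, x \in E1 <-> rho <[x]>%VS = 0%N)].
Proof.
move=> rhoM E1 E12_0 E12.
have rhoE1 : rho E1 = 0%N by exact: rank_qclosure0.
split.
- exact: qtrivial_rank0 (subvf _) rhoE1.
- by move=> V; apply: rank_daddv_pi (subvf _).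
- exact: qdirect_sum_rank0_summand.
- by move=> x; rewrite mem_qclosure0 ?memvf //; split => /eqP.
Qed.
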